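(* Let $G$ be an odd unicyclic graph on $n$ vertices $1,\ldots,n$ and edges $e_1,\ldots,e_n$ with cycle $C$. For distinct edges $e_i,e_j$ and a vertex $k$: (a) if $e_i,e_j\in C$ and $k\in G\setminus\{e_i,e_j\}[P_{e_i-e_j}]$, then $d(e_i,k)+d(e_j,k)$ and $d(e_i,e_j)$ have the same parity; (b) if $e_i,e_j\in C$ and $k\notin G\setminus\{e_i,e_j\}[P_{e_i-e_j}]$, then $d(e_i,k)+d(e_j,k)$ and $d(e_i,e_j)$ have different parity; (c) if $e_i,e_j\notin C$ and $k\in (G\setminus e_i(C))\cap(G\setminus e_j(C))$, then $d(e_i,k)+d(e_j,k)$ and $d(e_i,e_j)$ have different parity; (d) if $e_i\in C$, $e_j\notin C$ and $k\notin G\setminus e_j[C]$, then $d(e_i,k)+d(e_j,k)$ and $d(e_i,e_j)$ have different parity.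
   Context: A unicyclic graph on $n$ vertices is a simple connected graph with $n$ edges; it is odd if its unique cycle $C$ has odd length. $d$ is graph distance; for vertex $k$ and edge $e=\{l,m\}$, $d(e,k):=\min\{d(k,l),d(k,m)\}$, and for edges $d(e_i,e_j):=\min\{d(l_i,e_j),d(m_i,e_j)\}$ where $e_i=\{l_i,m_i\}$. For an edge $e$ not on $C$, $G\setminus e[C]$ is the component of $G\setminus e$ containing $C$ and $G\setminus e(C)$ the other component. For distinct edges $e_i,e_j$ on $C$, $P_{e_i-e_j}$ is the shortest path between endpoints of $e_i$ and of $e_j$, and $G\setminus\{e_i,e_j\}[P_{e_i-e_j}]$ is the component of $G\setminus\{e_i,e_j\}$ containing $P_{e_i-e_j}$. *)

From mathcomp Require Import all_boot.
Set Implicit Arguments. Unset Strict Implicit. Unset Printing Implicit Defensive.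

(* A simple graph on a finite vertex type T is a symmetric irreflexive
   relation g : rel T. *)

Definition edges (T : finType) (g : rel T) : {set {set T}} :=
  [set [set p.1; p.2] | p in [pred p : T * T | g p.1 p.2]].

Definition unicyclic (T : finType) (g : rel T) : Prop :=
  [/\ symmetric g, irreflexive g, (forall x y, connect g x y)
    & #|edges g| = #|T|].

Definition is_cycle (T : finType) (g : rel T) (c : seq T) : bool :=
  [&& uniq c, cycle g c & 2 < size c].

Definition on_cycle (T : finType) (c : seq T) (l m : T) : bool :=
  (l \in c) && ((next c l == m) || (prev c l == m)).

(* Graph distance: least length of a walk from x to y (walks of length
   < #|T| suffice in a connected graph; returns #|T| if y unreachable). *)
Definition dist (T : finType) (g : rel T) (x y : T) : nat :=
  find (fun k => [exists p : k.-tuple T, path g x p && (last x p == y)])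
       (iota 0 #|T|).

Definition dist_ev (T : finType) (g : rel T) (l m k : T) : nat :=
  minn (dist g k l) (dist g k m).

Definition dist_ee (T : finType) (g : rel T) (li mi lj mj : T) : nat :=
  minn (dist_ev g lj mj li) (dist_ev g lj mj mi).

Definition del_edge (T : finType) (g : rel T) (l m : T) : rel T :=
  [rel x y | g x y && ([set x; y] != [set l; m])].

Definition in_comp (T : finType) (h : rel T) (s : seq T) (k : T) : bool :=
  has (fun w => connect h w k) s.

From mathcomp Require Import all_boot zify.
Set Implicit Arguments. Unset Strict Implicit. Unset Printing Implicit Defensive.

(* Parts (c) and (d) rest on cut edges: if deleting e = {a, b} separates k
   from C, with a on the side of C, then every path between the two sides of
   e runs through b and then a, so d(y, x) = d(y, b) + 1 + d(a, x) across e.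
   All three distances are computed from such identities; of two pendant
   edges separating k from C, one lies between k and the other.
   For (a) and (b), G \ e_j is a spanning tree, so the parity of the distance
   to u in it is a 2-colouring, proper on G \ e_j; it agrees on the ends of
   e_j, as otherwise C would be even. G \ {e_i, e_j} has n - 2 edges, hence
   separates the ends of e_i and those of e_j; flipping the colouring outside
   the component S of P gives a 2-colouring proper on G \ e_i that agrees on
   the ends of e_i. A shortest path from k to the nearer end of an edge avoids
   that edge, so d(e, k) is the colour difference of k and e mod 2, whence
   d(e_i, k) + d(e_j, k) = d(e_i, e_j) + [k \notin S] mod 2. *)

Definition connected (T : finType) (h : rel T) : Prop := forall x y, connect h x y.

Definition bicoloring (T : Type) (h : rel T) (f : T -> bool) : Prop :=
  forall x y, h x y -> f x != f y.

Section Walks.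
Variables (T : Type) (h : rel T).

Lemma path_exit (S : pred T) x p :
  path h x p -> S x -> ~~ S (last x p) ->
  exists p1 z p2, [/\ p = p1 ++ z :: p2, all S (x :: p1) & ~~ S z].
Proof.
elim: p x => [|y p IHp] x /=; first by move=> _ ->.
case/andP=> _ p_path Sx; case Sy: (S y) => last_y; last first.
  by exists [::], y, p; rewrite /= Sx Sy.
have [p1 [z [p2 [-> S_p1 Sz]]]] := IHp y p_path Sy last_y.
by exists (y :: p1), z, p2; rewrite /= Sx.
Qed.

Lemma path_bad_step (h' : rel T) x p :
  path h x p -> ~~ path h' x p ->
  exists p1 z p2, [/\ p = p1 ++ z :: p2, h (last x p1) z & ~~ h' (last x p1) z].
Proof.
elim: p x => [|y p IHp] x //=; case/andP=> hxy p_path.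
case h'xy: (h' x y) => /= bad; last by exists [::], y, p; rewrite h'xy.
have [p1 [z [p2 [-> ? ?]]]] := IHp y p_path bad.
by exists (y :: p1), z, p2.
Qed.

Lemma bicoloring_path f x p :
  bicoloring h f -> path h x p -> f (last x p) = f x (+) odd (size p).
Proof.
move=> f_col; elim: p x => [|y p IHp] x /=; first by rewrite addbF.
case/andP=> /f_col + /IHp ->.
by case: (f x); case: (f y); case: odd.
Qed.

End Walks.

Lemma bicoloring_cycle_even (T : eqType) (h : rel T) f c :
  bicoloring h f -> cycle h c -> ~~ odd (size c).
Proof.
case: c => [|x s] // f_col /(bicoloring_path f_col).
by rewrite last_rcons size_rcons /=; case: (f x); case: odd.
Qed.

Section Distance.
Variables (T : finType) (h : rel T).

Lemma dist_le_size x p : path h x p -> dist h x (last x p) <= size p.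
Proof.
move=> p_path; rewrite /dist; have [small|] := ltnP (size p) #|T|; last first.
  by apply: leq_trans; rewrite -{2}(size_iota 0 #|T|) find_size.
rewrite leqNgt; apply/negP => /(before_find 0).
rewrite nth_iota // add0n => /existsP; apply.
by exists (in_tuple p); rewrite /= p_path eqxx.
Qed.

Lemma shortest_path x y :
  connect h x y -> exists p, [/\ path h x p, last x p = y & size p = dist h x y].
Proof.
case/connectP=> p0 p0_path ->; case: (shortenP p0_path) => p p_path p_uniq _.
set P := fun k => [exists q : k.-tuple T, path h x q && (last x q == last x p)].
have has_P : has P (iota 0 #|T|).
  apply/hasP; exists (size p).
    by rewrite mem_iota add0n; have := max_card (mem (x :: p)); rewrite (card_uniqP p_uniq).
  by apply/existsP; exists (in_tuple p); rewrite /= p_path eqxx.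
have := nth_find 0 has_P; have := has_P; rewrite has_find size_iota => lt_find.
rewrite nth_iota // add0n => /existsP [q /andP [q_path /eqP q_last]].
by exists q; rewrite size_tuple.
Qed.

Lemma dist0 x : dist h x x = 0.
Proof. by apply/eqP; rewrite -leqn0 (dist_le_size (p := [::])). Qed.

Lemma dist_edge x y : h x y -> dist h x y <= 1.
Proof. by move=> hxy; rewrite (dist_le_size (p := [:: y])) //= hxy. Qed.

Hypothesis h_conn : connected h.

Lemma dist_triangle x y z : dist h x z <= dist h x y + dist h y z.
Proof.
have [p [p_path p_last <-]] := shortest_path (h_conn x y).
have [q [q_path q_last <-]] := shortest_path (h_conn y z).
rewrite -size_cat -q_last -p_last -last_cat dist_le_size // cat_path p_path.
by rewrite p_last.
Qed.

Hypothesis h_sym : symmetric h.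

Lemma dist_sym x y : dist h x y = dist h y x.
Proof.
suff le_dist a b : dist h b a <= dist h a b by apply/eqP; rewrite eqn_leq !le_dist.
have [p [p_path p_last <-]] := shortest_path (h_conn a b).
have rev_path : path h (last a p) (rev (belast a p)).
  by rewrite rev_path; apply: sub_path p_path => u w /=; rewrite h_sym.
have rev_last : last (last a p) (rev (belast a p)) = a.
  by case: (p) => [|z q] //=; rewrite rev_cons last_rcons.
by have := dist_le_size rev_path; rewrite rev_last size_rev size_belast p_last.
Qed.

End Distance.

Lemma set2_eq_cases (T : finType) (a b l m : T) :
  [set a; b] = [set l; m] -> (a = l /\ b = m) \/ (a = m /\ b = l).
Proof.
move=> e; have a_lm : a \in [set l; m] by rewrite -e set21.
have b_lm : b \in [set l; m] by rewrite -e set22.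
have l_ab : l \in [set a; b] by rewrite e set21.
have m_ab : m \in [set a; b] by rewrite e set22.
by move: a_lm b_lm l_ab m_ab => /set2P[]-> /set2P[]-> /set2P[]? /set2P[]?; subst; auto.
Qed.

Lemma minn_set2 (T : finType) (f : T -> nat) a b l m :
  [set a; b] = [set l; m] -> minn (f a) (f b) = minn (f l) (f m).
Proof. by case/set2_eq_cases=> [[-> ->]|[-> ->]] //; rewrite minnC. Qed.

Section Edges.
Variables (T : finType) (h : rel T).

Lemma mem_edges x y : h x y -> [set x; y] \in edges h.
Proof. by move=> hxy; apply/imsetP; exists (x, y). Qed.

Lemma del_edge_sub l m : subrel (del_edge h l m) h.
Proof. by move=> x y /andP []. Qed.

Lemma del_edge_sym l m : symmetric h -> symmetric (del_edge h l m).
Proof. by move=> h_sym x y; rewrite /del_edge /= h_sym setUC. Qed.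

Lemma del_edge_set2 a b l m : [set a; b] = [set l; m] -> del_edge h a b = del_edge h l m.
Proof. by rewrite /del_edge => ->. Qed.

Lemma del_edge_step l m x y : h x y -> ~~ del_edge h l m x y -> [set x; y] = [set l; m].
Proof. by rewrite /del_edge /= => -> /negbNE /eqP. Qed.

Lemma del_edgeAC a b l m : del_edge (del_edge h a b) l m =2 del_edge (del_edge h l m) a b.
Proof. by move=> x y; rewrite /del_edge /= -!andbA; congr (_ && _); rewrite andbC. Qed.

Lemma edges_del_edge l m : edges (del_edge h l m) = edges h :\ [set l; m].
Proof.
apply/setP=> E; rewrite in_setD1; apply/imsetP/andP.
  by case=> [[x y]] /andP [/= hxy neq] ->; rewrite neq mem_edges.
case=> neq /imsetP [[x y] hxy def_E]; exists (x, y) => //.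
by rewrite inE /del_edge /= -def_E neq andbT.
Qed.

Lemma connected_del_edge l m :
  symmetric h -> connected h -> connect (del_edge h l m) l m ->
  connected (del_edge h l m).
Proof.
move=> h_sym h_conn lm x y; apply: connect_sub (h_conn x y) => a b hab.
case del_ab: (del_edge h l m a b); first exact: connect1.
have /set2_eq_cases [[-> ->]|[-> ->]] // := del_edge_step hab (negbT del_ab).
by rewrite (sym_connect_sym (del_edge_sym l m h_sym)).
Qed.

Lemma in_comp_mem s x : x \in s -> in_comp h s x.
Proof. by move=> sx; apply/hasP; exists x. Qed.

Lemma in_comp_edge s x y : symmetric h -> h x y -> in_comp h s x = in_comp h s y.
Proof.
move=> h_sym hxy; apply: eq_has => w /=; apply/idP/idP => /connect_trans; apply.
  exact: connect1.
by apply: connect1; rewrite h_sym.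
Qed.

End Edges.

Section SpanningTree.
Variables (T : finType) (h : rel T) (r : T).
Hypothesis h_conn : connected h.

Definition parent (v : T) : T := odflt v [pick w | h v w && (dist h w r < dist h v r)].

Lemma parentP v : v != r -> h v (parent v) && (dist h (parent v) r < dist h v r).
Proof.
rewrite /parent => neq_vr; case: pickP => [w //|no_parent].
have [[|w p] [/= p_path p_last p_size]] := shortest_path (h_conn v r).
  by rewrite -p_last eqxx in neq_vr.
case/andP: p_path => hvw /dist_le_size; rewrite p_last => le_wr.
by have /= := no_parent w; rewrite hvw -p_size ltnS le_wr.
Qed.

Let parent_edges : {set {set T}} := [set [set v; parent v] | v in [set~ r]].

Lemma parent_edges_sub : parent_edges \subset edges h.
Proof.
apply/subsetP=> E /imsetP [v]; rewrite in_setC1 => /parentP /andP [hvp _] ->.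
exact: mem_edges.
Qed.

Lemma card_parent_edges : #|parent_edges| = #|T|.-1.
Proof.
rewrite card_in_imset ?cardsC1 // => v w; rewrite !in_setC1 => v_r w_r.
case/set2_eq_cases=> [[]//|[def_v def_w]].
have /andP [_] := parentP v_r; have /andP [_] := parentP w_r.
by rewrite -def_v def_w => /ltn_trans lt1 /lt1; rewrite ltnn.
Qed.

Lemma tree_bicoloring : #|edges h| <= #|T|.-1 -> bicoloring h (fun x => odd (dist h x r)).
Proof.
move=> few_edges x y /mem_edges.
have/subset_cardP/(_ parent_edges_sub) <- : #|parent_edges| = #|edges h|.
  by apply/eqP; rewrite eqn_leq subset_leq_card ?parent_edges_sub // card_parent_edges.
case/imsetP=> v; rewrite in_setC1 => /parentP /andP [hvp lt_pv].
have le_vp : dist h v r <= dist h (parent v) r + 1.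
  by rewrite addnC (leq_trans (dist_triangle h_conn _ (parent v) _)) ?leq_add2r ?dist_edge.
have dist_v : dist h v r = (dist h (parent v) r).+1 by lia.
by case/set2_eq_cases=> [[-> ->]|[-> ->]]; rewrite dist_v /= ?negbK; case: odd.
Qed.

End SpanningTree.

Lemma connected_card_edges (T : finType) (h : rel T) :
  connected h -> #|T|.-1 <= #|edges h|.
Proof.
move=> h_conn; case: (posnP #|T|) => [-> //|/card_gt0P [r _]].
by rewrite -(card_parent_edges r h_conn) subset_leq_card // parent_edges_sub.
Qed.

Section EdgeDistance.
Variables (T : finType) (g : rel T).

Lemma dist_ev_set2 a b l m k :
  [set a; b] = [set l; m] -> dist_ev g a b k = dist_ev g l m k.
Proof. exact: minn_set2. Qed.

Lemma dist_ee_set2 ai bi li mi aj bj lj mj :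
  [set ai; bi] = [set li; mi] -> [set aj; bj] = [set lj; mj] ->
  dist_ee g ai bi aj bj = dist_ee g li mi lj mj.
Proof.
move=> ei ej; rewrite /dist_ee !(dist_ev_set2 _ ej).
exact: (minn_set2 (dist_ev g lj mj)).
Qed.

Lemma dist_ee_le li mi lj mj x y :
  x \in [set li; mi] -> y \in [set lj; mj] -> dist_ee g li mi lj mj <= dist g x y.
Proof. by rewrite /dist_ee /dist_ev => /set2P[]-> /set2P[]->; lia. Qed.

Hypothesis g_conn : connected g.

Lemma odd_dist_ev f a b k :
  bicoloring (del_edge g a b) f -> f a = f b -> odd (dist_ev g a b k) = f k (+) f a.
Proof.
move=> f_col fab; set w := if dist g k a <= dist g k b then a else b.
have dist_w : dist g k w = dist_ev g a b k by rewrite /w /dist_ev; case: leqP.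
have f_w : f w = f a by rewrite /w; case: leqP.
have [p [p_path p_last p_size]] := shortest_path (g_conn k w).
suff /(bicoloring_path f_col) : path (del_edge g a b) k p.
  by rewrite p_last f_w p_size dist_w => ->; case: (f k); case: (f a); case: odd.
apply/negPn/negP=> /(path_bad_step p_path) [p1 [z [p2 [def_p gz /(del_edge_step gz) e]]]].
have : dist_ev g a b k <= dist g k (last k p1).
  by rewrite /dist_ev; case/set2_eq_cases: e => [[-> _]|[-> _]]; rewrite ?geq_minl ?geq_minr.
move: p_path; rewrite -dist_w -p_size def_p size_cat cat_path => /andP [/dist_le_size].
by rewrite /=; lia.
Qed.

Hypothesis g_sym : symmetric g.

Lemma dist_eeC li mi lj mj : dist_ee g li mi lj mj = dist_ee g lj mj li mi.
Proof.
rewrite /dist_ee /dist_ev !(dist_sym g_conn g_sym lj) !(dist_sym g_conn g_sym mj).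
lia.
Qed.

End EdgeDistance.

Lemma on_cycle_mem (T : finType) (c : seq T) l m : on_cycle c l m -> (l \in c) && (m \in c).
Proof. by case/andP=> lc /orP[]/eqP<-; rewrite ?mem_next ?mem_prev lc. Qed.

Section CycleEdge.
Variables (T : finType) (g : rel T) (c : seq T).
Hypothesis c_cycle : is_cycle g c.

Lemma cycle_connect_prev x : x \in c -> connect (del_edge g x (prev c x)) x (prev c x).
Proof.
case/and3P: c_cycle => c_uniq cycle_c c_size /rot_to [i s def_c].
have /and3P [/andP [x_s s_uniq] xs_cycle xs_size] : is_cycle g (x :: s).
  by rewrite /is_cycle -def_c rot_uniq rot_cycle size_rot c_uniq cycle_c.
have /andP [xs_path _] : path g x s && g (last x s) x by rewrite -rcons_path.
rewrite -(prev_rot i c_uniq) def_c.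
have -> : prev (x :: s) x = last x s.
  by rewrite prev_nth mem_head (memNindex x_s) -[size s]/((size (x :: s)).-1) nth_last.
case: s {def_c xs_cycle} x_s s_uniq xs_path xs_size => [|y [|z s]] // x_ys /andP [y_zs _].
case/andP=> gxy ys_path _; rewrite [last x _]/=; set l := last z s.
have y_l : y != l by apply: contraNneq y_zs => ->; apply: mem_last.
have del_step a b : g a b -> a != x -> b != x -> del_edge g x l a b.
  move=> gab ax bx; rewrite /del_edge /= gab; apply: contraTneq (set21 x l) => <-.
  by rewrite in_set2 !(eq_sym x) (negbTE ax) (negbTE bx).
have ys_del : path (del_edge g x l) y (z :: s).
  apply: (sub_in_path (P := predC1 x)) (ys_path : path g y (z :: s)).
    by move=> a b ax bx gab; apply: del_step.
  by apply/allP=> a a_ys /=; apply: contraNneq x_ys => <-.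
apply/connectP; exists [:: y, z & s] => //; apply/andP; split=> //; rewrite /del_edge /= gxy.
apply: contraNneq y_l => /set2_eq_cases [[_ ->] //|[_ y_x]].
by rewrite -y_x mem_head in x_ys.
Qed.

Lemma on_cycle_connect l m :
  symmetric g -> on_cycle c l m -> connect (del_edge g l m) l m.
Proof.
move=> g_sym /andP [l_c /orP [/eqP <-|/eqP <-]]; last exact: cycle_connect_prev.
have c_uniq : uniq c by case/and3P: c_cycle.
rewrite (sym_connect_sym (del_edge_sym _ _ g_sym)) (del_edge_set2 _ (setUC _ _)).
by have := @cycle_connect_prev (next c l); rewrite mem_next prev_next //; apply.
Qed.

End CycleEdge.

Section CutEdges.
Variables (T : finType) (g : rel T) (c : seq T).
Hypotheses (g_sym : symmetric g) (g_conn : connected g).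

(* side l m is the vertex set of G \ e[C] for e = {l, m}. *)
Local Notation side l m := (in_comp (del_edge g l m) c).

Lemma side_cut l m x y : g x y -> side l m x -> ~~ side l m y -> [set x; y] = [set l; m].
Proof.
move=> gxy x_in; apply: contraNeq => neq.
have del_xy : del_edge g l m x y by rewrite /del_edge /= gxy neq.
by rewrite -(in_comp_edge _ (del_edge_sym l m g_sym) del_xy).
Qed.

Lemma side_orient l m k x0 :
  x0 \in c -> ~~ side l m k ->
  exists a b, [/\ [set l; m] = [set a; b], g a b, side a b a & ~~ side a b b].
Proof.
move=> x0_c k_out; have [p [p_path p_last _]] := shortest_path (g_conn k x0).
have last_in : ~~ predC (side l m) (last k p) by rewrite /= negbK p_last in_comp_mem.
have [p1 [z [p2 [def_p /allP p1_out z_in]]]] := path_exit p_path k_out last_in.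
move: p_path; rewrite def_p cat_path => /andP [_ /andP [gyz _]].
have y_out : ~~ side l m (last k p1) by apply: p1_out; rewrite mem_last.
rewrite negbK in z_in; have e := side_cut (etrans (g_sym _ _) gyz) z_in y_out.
by exists z, (last k p1); rewrite (del_edge_set2 _ e) e g_sym.
Qed.

Lemma side_exit_edge l m l' m' x :
  side l m x -> ~~ side l' m' x -> side l m l' && side l m m'.
Proof.
case/hasP=> w w_c /connectP [p p_path p_last]; rewrite p_last => x_out.
have w_in := in_comp_mem (del_edge g l' m') w_c.
have [p1 [z [p2 [def_p /allP p1_in z_out]]]] := path_exit p_path w_in x_out.
have on_path y : y \in w :: p -> side l m y.
  by move=> y_p; apply/hasP; exists w; last exact: path_connect y_p.
have y_p : last w p1 \in w :: p by rewrite def_p -cat_cons mem_cat mem_last.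
have z_p : z \in w :: p by rewrite def_p inE mem_cat inE eqxx !orbT.
move: p_path; rewrite def_p cat_path => /andP [_ /andP [/del_edge_sub gyz _]].
have := side_cut gyz (p1_in _ (mem_last w p1)) z_out.
by case/set2_eq_cases=> [[<- <-]|[<- <-]]; rewrite !on_path.
Qed.

Section OneCut.
Variables a b : T.
Hypotheses (gab : g a b) (a_in : side a b a) (b_out : ~~ side a b b).

Lemma dist_cut x y : side a b x -> ~~ side a b y -> dist g y x = dist g y b + 1 + dist g a x.
Proof.
move=> x_in y_out; apply/eqP; rewrite eqn_leq; apply/andP; split.
  rewrite -addnA (leq_trans (dist_triangle g_conn _ b _)) // leq_add2l.
  by rewrite (leq_trans (dist_triangle g_conn _ a _)) // leq_add2r dist_edge // g_sym.
have [p [p_path p_last <-]] := shortest_path (g_conn y x).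
have last_in : ~~ predC (side a b) (last y p) by rewrite /= negbK p_last.
have [p1 [z [p2 [def_p /allP p1_out z_in]]]] := path_exit p_path y_out last_in.
move: p_path p_last; rewrite def_p cat_path last_cat.
case/andP=> p1_path /andP [gwz p2_path] /= p2_last.
have w_out : ~~ side a b (last y p1) by apply: p1_out; rewrite mem_last.
rewrite negbK in z_in; have := side_cut (etrans (g_sym _ _) gwz) z_in w_out.
case/set2_eq_cases=> [[z_a w_b]|[z_b _]]; last by move: z_in; rewrite z_b (negbTE b_out).
have := dist_le_size p1_path; have := dist_le_size p2_path.
by rewrite size_cat /= p2_last w_b z_a; lia.
Qed.

Lemma dist_cut_in y : side a b y -> dist g y b = (dist g y a).+1.
Proof.
move=> y_in; rewrite !(dist_sym g_conn g_sym y) (dist_cut y_in b_out) dist0.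
by rewrite add0n add1n.
Qed.

Lemma dist_cut_out y : ~~ side a b y -> dist g y a = (dist g y b).+1.
Proof. by move=> y_out; rewrite (dist_cut a_in y_out) dist0 addn0 addn1. Qed.

Lemma dist_ev_cut_in y : side a b y -> dist_ev g a b y = dist g y a.
Proof. by move=> y_in; rewrite /dist_ev dist_cut_in //; apply/minn_idPl. Qed.

Lemma dist_ev_cut_out y : ~~ side a b y -> dist_ev g a b y = dist g y b.
Proof. by move=> y_out; rewrite /dist_ev dist_cut_out //; apply/minn_idPr. Qed.

Lemma odd_dist_cut_cycle_edge li mi k :
  li \in c -> mi \in c -> ~~ side a b k ->
  odd (dist_ev g li mi k + dist_ev g a b k) != odd (dist_ee g li mi a b).
Proof.
move=> /(in_comp_mem (del_edge g a b)) li_in /(in_comp_mem (del_edge g a b)) mi_in k_out.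
rewrite dist_ev_cut_out // /dist_ee !dist_ev_cut_in // /dist_ev.
rewrite (dist_cut li_in k_out) (dist_cut mi_in k_out) !(dist_sym g_conn g_sym a).
lia.
Qed.

End OneCut.

Section TwoCuts.
Variables ai bi aj bj : T.
Hypotheses (gi : g ai bi) (ai_in : side ai bi ai) (bi_out : ~~ side ai bi bi).
Hypotheses (gj : g aj bj) (aj_in : side aj bj aj) (bj_out : ~~ side aj bj bj).

Lemma odd_dist_nested_cuts k :
  ~~ side ai bi k -> ~~ side aj bj k -> side aj bj bi ->
  odd (dist_ev g ai bi k + dist_ev g aj bj k) != odd (dist_ee g ai bi aj bj).
Proof.
move=> ki kj bi_j; have dist_k_bi := dist_cut gj aj_in bj_out bi_j kj.
have bj_i : ~~ side ai bi bj.
  by apply/negP=> /(dist_cut gi ai_in bi_out)/(_ ki); lia.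
have aj_i : ~~ side ai bi aj.
  apply/negP=> /(dist_cut gi ai_in bi_out)/(_ ki).
  by rewrite (dist_cut_out gj aj_in bj_out kj); lia.
rewrite (dist_ev_cut_out gi ai_in bi_out ki) (dist_ev_cut_out gj aj_in bj_out kj).
rewrite /dist_ee (dist_ev_cut_in gj aj_in bj_out bi_j) /dist_ev !(dist_sym g_conn g_sym ai).
rewrite (dist_cut_out gi ai_in bi_out aj_i) (dist_cut_out gi ai_in bi_out bj_i).
rewrite (dist_sym g_conn g_sym bj) (dist_cut_in gj aj_in bj_out bi_j).
by move: dist_k_bi; rewrite (dist_sym g_conn g_sym aj); lia.
Qed.

End TwoCuts.

Lemma odd_dist_two_cuts ai bi aj bj k :
  g ai bi -> side ai bi ai -> ~~ side ai bi bi ->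
  g aj bj -> side aj bj aj -> ~~ side aj bj bj ->
  [set ai; bi] != [set aj; bj] -> ~~ side ai bi k -> ~~ side aj bj k ->
  odd (dist_ev g ai bi k + dist_ev g aj bj k) != odd (dist_ee g ai bi aj bj).
Proof.
move=> gi ai_in bi_out gj aj_in bj_out neq ki kj.
have [bi_j|bi_j] := boolP (side aj bj bi); first exact: odd_dist_nested_cuts.
have bj_i : side ai bi bj.
  have [ai_j|ai_j] := boolP (side aj bj ai); first by case/eqP: neq; apply: side_cut.
  by case/andP: (side_exit_edge ai_in ai_j).
by rewrite addnC dist_eeC // odd_dist_nested_cuts.
Qed.

Lemma odd_dist_cycle_edge_pendant li mi lj mj k :
  li \in c -> mi \in c -> g lj mj -> ~~ side lj mj k ->
  odd (dist_ev g li mi k + dist_ev g lj mj k) != odd (dist_ee g li mi lj mj).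
Proof.
move=> li_c mi_c gj kj; have [a [b [e gab a_in b_out]]] := side_orient li_c kj.
rewrite (del_edge_set2 _ e) in kj.
rewrite (dist_ev_set2 _ _ e) (dist_ee_set2 _ (erefl _) e).
exact: odd_dist_cut_cycle_edge.
Qed.

Lemma odd_dist_pendant_edges li mi lj mj k x0 :
  x0 \in c -> g li mi -> g lj mj -> [set li; mi] != [set lj; mj] ->
  ~~ side li mi k -> ~~ side lj mj k ->
  odd (dist_ev g li mi k + dist_ev g lj mj k) != odd (dist_ee g li mi lj mj).
Proof.
move=> x0_c gi gj neq ki kj.
have [ai [bi [ei gai ai_in bi_out]]] := side_orient x0_c ki.
have [aj [bj [ej gaj aj_in bj_out]]] := side_orient x0_c kj.
rewrite (del_edge_set2 _ ei) in ki; rewrite (del_edge_set2 _ ej) in kj; rewrite ei ej in neq.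
rewrite (dist_ev_set2 _ _ ei) (dist_ev_set2 _ _ ej) (dist_ee_set2 _ ei ej).
exact: odd_dist_two_cuts.
Qed.

End CutEdges.

Section CycleEdges.
Variables (T : finType) (g : rel T) (c : seq T).
Hypotheses (g_unicyclic : unicyclic g) (c_cycle : is_cycle g c) (c_odd : odd (size c)).
Variables (u u' v v' : T) (p : seq T).
Hypotheses (gu : g u u') (gv : g v v') (neq_uv : [set u; u'] != [set v; v']).
Hypotheses (p_path : path g u p) (p_last : last u p = v).
Hypothesis (p_size : size p = dist_ee g u u' v v').

Local Notation Ti := (del_edge g u u').
Local Notation Tj := (del_edge g v v').
Local Notation G2 := (del_edge Ti v v').

Hypotheses (u_cycle : connect Ti u u') (v_cycle : connect Tj v v').

Let g_sym : symmetric g. Proof. by case: g_unicyclic. Qed.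
Let g_conn : connected g. Proof. by case: g_unicyclic. Qed.
Let G2_sym : symmetric G2. Proof. exact/del_edge_sym/del_edge_sym. Qed.
Let G2_Tj : subrel G2 Tj. Proof. by move=> x y; rewrite del_edgeAC => /del_edge_sub. Qed.

Lemma edge_path_avoids_edges : path G2 u p.
Proof.
apply/negPn/negP=> /(path_bad_step p_path) [p1 [z [p2 [def_p gyz bad]]]].
move: p_path p_last p_size; rewrite def_p cat_path last_cat size_cat.
case/andP=> /dist_le_size p1_le /andP [_ /dist_le_size p2_le] /= p2_last.
rewrite p2_last in p2_le.
have [Ti_yz|/(del_edge_step gyz) e] := boolP (Ti (last u p1) z).
  have e := del_edge_step Ti_yz bad.
  have := @dist_ee_le _ g u u' v v' u (last u p1); rewrite set21 -e set21 => /(_ isT isT).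
  lia.
have := @dist_ee_le _ g u u' v v' z v; rewrite -e set22 set21 => /(_ isT isT).
lia.
Qed.

Lemma connected_Ti : connected Ti.
Proof. exact: connected_del_edge g_sym g_conn u_cycle. Qed.

Lemma connected_Tj : connected Tj.
Proof. exact: connected_del_edge g_sym g_conn v_cycle. Qed.

Lemma card_edges_Tj : #|edges Tj| = #|T|.-1.
Proof.
case: g_unicyclic => _ _ _ <-.
by rewrite edges_del_edge (cardsD1 [set v; v'] (edges g)) (mem_edges gv).
Qed.

Lemma not_connected_G2 : ~ connected G2.
Proof.
move=> /connected_card_edges; case: g_unicyclic => _ _ _ <-.
rewrite !edges_del_edge (cardsD1 [set u; u'] (edges g)) (mem_edges gu).
rewrite (cardsD1 [set v; v'] (edges g :\ _)) in_setD1 eq_sym neq_uv (mem_edges gv) /=.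
by rewrite add0n add1n ltnn.
Qed.

Let col (x : T) : bool := odd (dist Tj x u).

Lemma col_bicoloring : bicoloring Tj col.
Proof. by apply: tree_bicoloring connected_Tj _; rewrite card_edges_Tj. Qed.

Lemma col_vv' : col v = col v'.
Proof.
apply/eqP/negPn/negP=> neq_col.
have g_col : bicoloring g col.
  move=> x y gxy; have [Tj_xy|/(del_edge_step gxy)] := boolP (Tj x y).
    exact: col_bicoloring.
  by case/set2_eq_cases=> [[-> ->]|[-> ->]]; rewrite // eq_sym.
by case/and3P: c_cycle => _ /(bicoloring_cycle_even g_col); rewrite c_odd.
Qed.

Lemma not_connect_uu' : ~~ connect G2 u u'.
Proof.
apply/negP=> uu'; apply: not_connected_G2 => x y.
rewrite -(eq_connect (del_edgeAC g v v' u u')); move: x y.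
apply: connected_del_edge connected_Tj _; first exact/del_edge_sym.
by rewrite (eq_connect (del_edgeAC g v v' u u')).
Qed.

Lemma connect_uv : connect G2 u v.
Proof. by have := path_connect edge_path_avoids_edges (mem_last u p); rewrite p_last. Qed.

Lemma not_connect_uv' : ~~ connect G2 u v'.
Proof.
apply/negP=> uv'; apply: not_connected_G2.
apply: connected_del_edge connected_Ti _; first exact/del_edge_sym.
by apply: connect_trans uv'; rewrite (sym_connect_sym G2_sym) connect_uv.
Qed.

Let pi (x : T) : bool := col x (+) ~~ connect G2 u x.

Lemma pi_bicoloring : bicoloring Ti pi.
Proof.
move=> x y Ti_xy; rewrite /pi; have [G2_xy|/(del_edge_step Ti_xy)] := boolP (G2 x y).
  have -> : connect G2 u x = connect G2 u y.
    by apply/idP/idP=> /connect_trans; apply; apply: connect1; rewrite // G2_sym.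
  by move: (col_bicoloring (G2_Tj G2_xy)); case: (col x); case: (col y); case: connect.
case/set2_eq_cases=> [[-> ->]|[-> ->]]; rewrite col_vv' connect_uv (negbTE not_connect_uv');
  by case: (col v').
Qed.

Lemma pi_uu' : pi u = pi u'.
Proof.
have Tj_uu' : Tj u u' by rewrite /del_edge /= gu neq_uv.
move: (col_bicoloring Tj_uu'); rewrite /pi connect0 (negbTE not_connect_uu').
by case: (col u); case: (col u').
Qed.

Lemma odd_dist_cycle_edges k :
  odd (dist_ev g u u' k + dist_ev g v v' k) =
  odd (dist_ee g u u' v v') (+) ~~ in_comp G2 (u :: p) k.
Proof.
have -> : in_comp G2 (u :: p) k = connect G2 u k.
  apply/hasP/idP=> [[w /(path_connect edge_path_avoids_edges) uw wk]|uk]; last first.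
    by exists u; rewrite ?mem_head.
  exact: connect_trans uw wk.
have := bicoloring_path col_bicoloring (sub_path G2_Tj edge_path_avoids_edges).
rewrite oddD (odd_dist_ev g_conn k pi_bicoloring pi_uu').
rewrite (odd_dist_ev g_conn k col_bicoloring col_vv').
rewrite p_last -p_size /pi => ->.
by rewrite connect0; case: (col k); case: (col u); case: (connect G2 u k); case: odd.
Qed.

End CycleEdges.

Lemma sym_set2 (T : finType) (r : rel T) a b l m :
  symmetric r -> [set a; b] = [set l; m] -> r a b -> r l m.
Proof. by move=> r_sym /set2_eq_cases [[<- <-]|[<- <-]] //; rewrite r_sym. Qed.

Lemma set2_of_mem (T : finType) (a b x : T) :
  x \in [:: a; b] -> exists y, [set a; b] = [set x; y].
Proof. by rewrite !inE => /orP [] /eqP ->; [exists b | exists a; rewrite setUC]. Qed.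

Lemma odd_dist_cycle_edges_parity (T : finType) (g : rel T) (c : seq T) li mi lj mj u p k :
  unicyclic g -> is_cycle g c -> odd (size c) ->
  g li mi -> g lj mj -> [set li; mi] != [set lj; mj] ->
  on_cycle c li mi -> on_cycle c lj mj ->
  u \in [:: li; mi] -> path g u p -> last u p \in [:: lj; mj] ->
  size p = dist_ee g li mi lj mj ->
  odd (dist_ev g li mi k + dist_ev g lj mj k) =
  odd (dist_ee g li mi lj mj) (+) ~~ in_comp (del_edge (del_edge g li mi) lj mj) (u :: p) k.
Proof.
move=> g_uni c_cycle c_odd gi gj neq ci cj /set2_of_mem [u' ei] p_path.
case/set2_of_mem=> v' ej p_size; have g_sym : symmetric g by case: g_uni.
have cycle_conn l m a b : on_cycle c l m -> [set l; m] = [set a; b] -> connect (del_edge g a b) a b.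
  move=> /(on_cycle_connect c_cycle g_sym) lm e; rewrite -(del_edge_set2 _ e).
  exact: sym_set2 (sym_connect_sym (del_edge_sym _ _ g_sym)) e lm.
rewrite ei ej in neq; rewrite (dist_ee_set2 _ ei ej) in p_size *.
rewrite (del_edge_set2 _ ei) (del_edge_set2 _ ej) (dist_ev_set2 _ _ ei) (dist_ev_set2 _ _ ej).
have gu := sym_set2 g_sym ei gi; have gv := sym_set2 g_sym ej gj.
apply: (odd_dist_cycle_edges g_uni c_cycle c_odd gu gv) => //.
- exact: cycle_conn ci ei.
- exact: cycle_conn cj ej.
Qed.

Theorem mainTheorem12 (T : finType) (g : rel T) (c : seq T)
  (hG : unicyclic g) (hc : is_cycle g c) (hodd : odd (size c))
  (li mi lj mj k : T) (hi : g li mi) (hj : g lj mj)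
  (hneq : [set li; mi] != [set lj; mj]) :
  let Di := dist_ev g li mi k in
  let Dj := dist_ev g lj mj k in
  let Dij := dist_ee g li mi lj mj in
  let G2 := del_edge (del_edge g li mi) lj mj in
  [/\
   (* (a) *)
   (on_cycle c li mi -> on_cycle c lj mj ->
    forall (u : T) (p : seq T), u \in [:: li; mi] -> path g u p ->
      last u p \in [:: lj; mj] -> size p = Dij ->
      in_comp G2 (u :: p) k -> odd (Di + Dj) = odd Dij),
   (* (b) *)
   (on_cycle c li mi -> on_cycle c lj mj ->
    forall (u : T) (p : seq T), u \in [:: li; mi] -> path g u p ->
      last u p \in [:: lj; mj] -> size p = Dij ->
      ~~ in_comp G2 (u :: p) k -> odd (Di + Dj) != odd Dij),
   (* (c) *)
   (~~ on_cycle c li mi -> ~~ on_cycle c lj mj ->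
      ~~ in_comp (del_edge g li mi) c k -> ~~ in_comp (del_edge g lj mj) c k ->
      odd (Di + Dj) != odd Dij)
  & (* (d) *)
   (on_cycle c li mi -> ~~ on_cycle c lj mj ->
      ~~ in_comp (del_edge g lj mj) c k -> odd (Di + Dj) != odd Dij)].
Proof.
move=> Di Dj Dij G2; have [g_sym _ g_conn _] := hG.
have parity := odd_dist_cycle_edges_parity k hG hc hodd hi hj hneq.
have c_head : nth li c 0 \in c by apply: mem_nth; case/and3P: hc => _ _ /ltnW/ltnW.
split.
- move=> ci cj u p u_i p_path p_last p_size k_in.
  by rewrite (parity u p ci cj u_i p_path p_last p_size) k_in addbF.
- move=> ci cj u p u_i p_path p_last p_size k_out.
  by rewrite (parity u p ci cj u_i p_path p_last p_size) k_out addbT; case: odd.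
- by move=> _ _; apply: odd_dist_pendant_edges c_head hi hj hneq.
- by move=> /on_cycle_mem /andP [li_c mi_c] _; apply: odd_dist_cycle_edge_pendant.
Qed.
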